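(* Let $(G,\cdot)$ be a two-step nilpotent group, $n$ a nonzero integer, and define $a\circ b=a\cdot a^{-n}ba^{n}$ for $a,b\in G$. Then $(G,\cdot,\circ)$ is a $\lambda$-homomorphic skew left brace; that is, the map $\lambda\colon(G,\cdot)\to\operatorname{Aut}(G,\cdot)$, $\lambda_a(b)=a^{-1}\cdot(a\circ b)=a^{-n}ba^{n}$, is a group homomorphism.
   Context: A two-step nilpotent group is a group of nilpotency class at most $2$, i.e. all commutators $[a,b]=a^{-1}b^{-1}ab$ are central. A skew left brace is a triple $(G,\cdot,\circ)$ where $(G,\cdot)$ and $(G,\circ)$ are groups on the same set with $a\circ(b\cdot c)=(a\circ b)\cdot a^{-1}\cdot(a\circ c)$ for all $a,b,c$. Its $\lambda$-map is $\lambda_a(b)=a^{-1}\cdot(a\circ b)$, and it is $\lambda$-homomorphic if $\lambda\colon(G,\cdot)\to\operatorname{Aut}(G,\cdot)$ is a group homomorphism. *)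

From Stdlib Require Import ZArith.

Section GroupDefs.
Context {G : Type}.

Definition is_group (mul : G -> G -> G) (one : G) (inv : G -> G) : Prop :=
  (forall a b c, mul a (mul b c) = mul (mul a b) c) /\
  (forall a, mul one a = a) /\ (forall a, mul a one = a) /\
  (forall a, mul (inv a) a = one) /\ (forall a, mul a (inv a) = one).

Definition commutator (mul : G -> G -> G) (inv : G -> G) (a b : G) : G :=
  mul (mul (mul (inv a) (inv b)) a) b.

Definition two_step_nilpotent (mul : G -> G -> G) (inv : G -> G) : Prop :=
  forall a b c, mul (commutator mul inv a b) c = mul c (commutator mul inv a b).

Fixpoint npow (mul : G -> G -> G) (one : G) (a : G) (k : nat) : G :=
  match k with
  | O => one
  | S k' => mul a (npow mul one a k')
  end.

Definition zpow (mul : G -> G -> G) (one : G) (inv : G -> G) (a : G) (z : Z) : G :=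
  match z with
  | Z0 => one
  | Zpos p => npow mul one a (Pos.to_nat p)
  | Zneg p => inv (npow mul one a (Pos.to_nat p))
  end.

Definition is_skew_left_brace (mul : G -> G -> G) (one : G) (inv : G -> G)
    (circ : G -> G -> G) : Prop :=
  is_group mul one inv /\
  (exists (one' : G) (inv' : G -> G), is_group circ one' inv') /\
  (forall a b c, circ a (mul b c) = mul (mul (circ a b) (inv a)) (circ a c)).

Definition brace_lambda (mul : G -> G -> G) (inv : G -> G) (circ : G -> G -> G)
    (a b : G) : G :=
  mul (inv a) (circ a b).

Definition is_automorphism (mul : G -> G -> G) (f : G -> G) : Prop :=
  (forall x y, f (mul x y) = mul (f x) (f y)) /\
  (forall x y, f x = f y -> x = y) /\ (forall y, exists x, f x = y).

Definition lambda_homomorphic (mul : G -> G -> G) (inv : G -> G)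
    (circ : G -> G -> G) : Prop :=
  (forall a, is_automorphism mul (brace_lambda mul inv circ a)) /\
  (forall a b x, brace_lambda mul inv circ (mul a b) x =
                 brace_lambda mul inv circ a (brace_lambda mul inv circ b x)).

End GroupDefs.

(* In a group of class at most 2 each map y |-> [x, y] is a homomorphism
   into the centre, so conjugation by a^n is lambda_a(x) = x [x, a]^n and
   lambda_(ab) = lambda_a lambda_b.  As lambda_a b is b times a central
   element, lambda_(lambda_a b) = lambda_b; together these give the
   associativity of a o b = a lambda_a(b), while the brace identity is the
   multiplicativity of lambda_a. *)

From Stdlib Require Import ZArith.

Section Group.

Variables (G : Type) (mul : G -> G -> G) (one : G) (inv : G -> G).
Hypothesis Hgrp : is_group mul one inv.

Local Infix "*" := mul.
Local Notation "x ^-1" := (inv x) (at level 2, left associativity, format "x ^-1").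
Local Notation "x ^ k" := (zpow mul one inv x k).
Local Notation "[~ x , y ]" := (commutator mul inv x y).

Lemma mulgA x y z : x * (y * z) = x * y * z.
Proof. destruct Hgrp as (HA & _); apply HA. Qed.

Lemma mul1g x : one * x = x.
Proof. destruct Hgrp as (_ & H1 & _); apply H1. Qed.

Lemma mulg1 x : x * one = x.
Proof. destruct Hgrp as (_ & _ & H1 & _); apply H1. Qed.

Lemma mulVg x : x^-1 * x = one.
Proof. destruct Hgrp as (_ & _ & _ & HV & _); apply HV. Qed.

Lemma mulgV x : x * x^-1 = one.
Proof. destruct Hgrp as (_ & _ & _ & _ & HV); apply HV. Qed.

Lemma mulKg x y : x^-1 * (x * y) = y.
Proof. now rewrite mulgA, mulVg, mul1g. Qed.

Lemma mulKVg x y : x * (x^-1 * y) = y.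
Proof. now rewrite mulgA, mulgV, mul1g. Qed.

Lemma invg_unique x y : x * y = one -> x^-1 = y.
Proof. intros Hxy. now rewrite <- (mulg1 x^-1), <- Hxy, mulKg. Qed.

Lemma invgK x : x^-1^-1 = x.
Proof. apply invg_unique, mulVg. Qed.

Lemma invMg x y : (x * y)^-1 = y^-1 * x^-1.
Proof.
  apply invg_unique.
  now rewrite mulgA, <- (mulgA x y), mulgV, mulg1, mulgV.
Qed.

Lemma invg1 : one^-1 = one.
Proof. apply invg_unique, mul1g. Qed.

Definition morphic (h : G -> G) : Prop := forall x y, h (x * y) = h x * h y.

Section Morphism.

Variable h : G -> G.
Hypothesis hM : morphic h.

Lemma morph1 : h one = one.
Proof.
  rewrite <- (mulKg (h one) (h one)), <- hM, mulg1.
  apply mulVg.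
Qed.

Lemma morphV x : h x^-1 = (h x)^-1.
Proof. symmetry; apply invg_unique. now rewrite <- hM, mulgV, morph1. Qed.

Lemma morph_zpow x k : h (x ^ k) = h x ^ k.
Proof.
  assert (Hnpow : forall m, h (npow mul one x m) = npow mul one (h x) m).
  { induction m as [|m IHm]; simpl; [apply morph1 | now rewrite hM, IHm]. }
  destruct k; simpl; [apply morph1 | apply Hnpow | now rewrite morphV, Hnpow].
Qed.

End Morphism.

Definition central (z : G) : Prop := forall x, z * x = x * z.

Lemma central1 : central one.
Proof. intros x. now rewrite mul1g, mulg1. Qed.

Lemma centralM u v : central u -> central v -> central (u * v).
Proof. intros Hu Hv x. now rewrite <- mulgA, Hv, mulgA, Hu, mulgA. Qed.

Lemma centralV u : central u -> central u^-1.
Proof.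
  intros Hu x.
  now rewrite <- (invgK x) at 1; rewrite <- invMg, <- Hu, invMg, invgK.
Qed.

Lemma central_npow z m : central z -> central (npow mul one z m).
Proof. intros Hz. induction m; simpl; auto using central1, centralM. Qed.

Lemma central_zpow z k : central z -> central (z ^ k).
Proof. intros Hz. destruct k; simpl; auto using central1, centralV, central_npow. Qed.

Lemma zpow1n k : one ^ k = one.
Proof.
  assert (Hnpow : forall m, npow mul one one m = one).
  { induction m as [|m IHm]; simpl; [easy | now rewrite IHm, mul1g]. }
  destruct k; simpl; rewrite ?Hnpow, ?invg1; easy.
Qed.

Lemma zpowN x k : x ^ (- k)%Z = (x ^ k)^-1.
Proof. destruct k; simpl; rewrite ?invg1, ?invgK; easy. Qed.

Lemma zpowMn_central u v k : central u -> (u * v) ^ k = u ^ k * v ^ k.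
Proof.
  intros Hu.
  assert (Hnpow : forall m,
    npow mul one (u * v) m = npow mul one u m * npow mul one v m).
  { induction m as [|m IHm]; simpl; [now rewrite mul1g |].
    rewrite IHm, <- !mulgA; f_equal.
    rewrite !mulgA; f_equal.
    symmetry; apply central_npow, Hu. }
  destruct k; simpl; [now rewrite mul1g | apply Hnpow |].
  rewrite Hnpow, invMg.
  symmetry; apply centralV, central_npow, Hu.
Qed.

Definition conjg (x p : G) : G := p^-1 * x * p.

Lemma conjg_commg x p : conjg x p = x * [~ x, p].
Proof. unfold conjg, commutator. now rewrite !mulgA, mulgV, mul1g. Qed.

Lemma conjgM x p q : conjg (conjg x p) q = conjg x (p * q).
Proof. unfold conjg. now rewrite invMg, !mulgA. Qed.

Lemma conjg1 x : conjg x one = x.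
Proof. unfold conjg. now rewrite invg1, mul1g, mulg1. Qed.

Lemma conjgK p x : conjg (conjg x p) p^-1 = x.
Proof. now rewrite conjgM, mulgV, conjg1. Qed.

Lemma conjgKV p x : conjg (conjg x p^-1) p = x.
Proof. now rewrite conjgM, mulVg, conjg1. Qed.

Lemma conjg_inj p x y : conjg x p = conjg y p -> x = y.
Proof. intros Hxy. now rewrite <- (conjgK p x), Hxy, conjgK. Qed.

Lemma conjgMl x y p : conjg (x * y) p = conjg x p * conjg y p.
Proof. unfold conjg. now rewrite <- !mulgA, (mulgA p), mulgV, mul1g. Qed.

Lemma conjg_central_l z p : central z -> conjg z p = z.
Proof. intros Hz. unfold conjg. now rewrite <- mulgA, Hz, mulKg. Qed.

Lemma conjg_central_r x p : central p -> conjg x p = x.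
Proof. intros Hp. unfold conjg. now rewrite <- Hp, mulKVg. Qed.

Lemma commgg x : [~ x, x] = one.
Proof. unfold commutator. now rewrite <- (mulgA x^-1 x^-1 x), mulVg, mulg1, mulVg. Qed.

Section TwoStepNilpotent.

Hypothesis Hnil : two_step_nilpotent mul inv.

Lemma central_commg x y : central [~ x, y].
Proof. intros z. apply Hnil. Qed.

(* Both sides times x are x conjugated by g h, computed in two ways. *)
Lemma commgMr x g h : [~ x, g * h] = [~ x, g] * [~ x, h].
Proof.
  rewrite <- (mulKg x [~ x, g * h]), <- conjg_commg, <- conjgM.
  rewrite (conjg_commg x g), conjgMl, (conjg_central_l _ h (central_commg x g)).
  rewrite conjg_commg, <- mulgA, mulKg.
  apply central_commg.
Qed.

Lemma commgXr x a k : [~ x, a ^ k] = [~ x, a] ^ k.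
Proof. apply (morph_zpow (commutator mul inv x)). intros y z. apply commgMr. Qed.

Section PowerConjugation.

Variable n : Z.

Definition lambda (a x : G) : G := conjg x (a ^ n).

Definition circ (a b : G) : G := a * (a ^ (- n)%Z * b * a ^ n).

Lemma circE a b : circ a b = a * lambda a b.
Proof. unfold circ, lambda, conjg. now rewrite zpowN. Qed.

Lemma lambdaE a x : lambda a x = x * [~ x, a] ^ n.
Proof. unfold lambda. now rewrite conjg_commg, commgXr. Qed.

Lemma lambda_morphic a : morphic (lambda a).
Proof. intros x y. apply conjgMl. Qed.

Lemma lambda_mul a b x : lambda (a * b) x = lambda a (lambda b x).
Proof.
  unfold lambda.
  rewrite conjgM, !conjg_commg, !commgXr, !commgMr, !commgXr.
  rewrite zpowMn_central by apply central_commg.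
  f_equal; apply central_zpow, central_commg.
Qed.

Lemma lambda_central z x : central z -> lambda z x = x.
Proof. intros Hz. apply conjg_central_r, central_zpow, Hz. Qed.

Lemma lambda_id a : lambda a a = a.
Proof. now rewrite lambdaE, commgg, zpow1n, mulg1. Qed.

Lemma lambda_V a : lambda a a^-1 = a^-1.
Proof. now rewrite (morphV (lambda a) (lambda_morphic a)), lambda_id. Qed.

Lemma lambda_lambda a b x : lambda (lambda a b) x = lambda b x.
Proof.
  rewrite (lambdaE a b), lambda_mul, (lambda_central ([~ b, a] ^ n)); [easy |].
  apply central_zpow, central_commg.
Qed.

Lemma circ_is_group : is_group circ one inv.
Proof.
  repeat split; intros; rewrite ?circE.
  - now rewrite lambda_morphic, lambda_mul, lambda_lambda, !mulgA.
  - now rewrite lambda_central, mul1g by apply central1.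
  - now rewrite morph1, mulg1 by apply lambda_morphic.
  - now rewrite <- (invgK a) at 3; rewrite lambda_V, mulgV.
  - now rewrite lambda_V, mulgV.
Qed.

Lemma circ_is_skew_left_brace : is_skew_left_brace mul one inv circ.
Proof.
  split; [exact Hgrp | split].
  - exists one, inv. apply circ_is_group.
  - intros a b c.
    now rewrite !circE, lambda_morphic, <- !mulgA, mulKg.
Qed.

Lemma brace_lambda_circ a x : brace_lambda mul inv circ a x = lambda a x.
Proof. unfold brace_lambda. now rewrite circE, mulKg. Qed.

Lemma circ_lambda_homomorphic : lambda_homomorphic mul inv circ.
Proof.
  split.
  - intros a. split; [| split].
    + intros x y. rewrite !brace_lambda_circ. apply lambda_morphic.
    + intros x y. rewrite !brace_lambda_circ. apply conjg_inj.
    + intros y. exists (conjg y (a ^ n)^-1).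
      rewrite brace_lambda_circ. apply conjgKV.
  - intros a b x. rewrite !brace_lambda_circ. apply lambda_mul.
Qed.

End PowerConjugation.

End TwoStepNilpotent.

End Group.

Theorem proposition5p5 (G : Type) (mul : G -> G -> G) (one : G) (inv : G -> G)
  (Hgrp : is_group mul one inv) (Hnil : two_step_nilpotent mul inv)
  (n : Z) (Hn : n <> 0%Z) :
  let circ := fun a b : G =>
    mul a (mul (mul (zpow mul one inv a (- n)) b) (zpow mul one inv a n)) in
  is_skew_left_brace mul one inv circ /\ lambda_homomorphic mul inv circ.
Proof.
  intros circ.
  split.
  - exact (circ_is_skew_left_brace G mul one inv Hgrp Hnil n).
  - exact (circ_lambda_homomorphic G mul one inv Hgrp Hnil n).
Qed.
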